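(* Let $\mathcal{N}$ be a Nash equilibrium of $\mathcal{G}_t$ for some $t\in[0,1]$ in which $\Pr[s^r_0]<1$ and $\Pr[s^c_0]<1$. Let $\mathcal{P}$ be the pair of probability distributions over $\{s^r_1,\dots,s^r_n\}$ and $\{s^c_1,\dots,s^c_n\}$ obtained by dividing each $\Pr[s^i_j]$ ($i\in\{r,c\}$, $1\le j\le n$) by $1-\Pr[s^i_0]$. Then $\mathcal{P}$ is a Nash equilibrium of the version of $\mathcal{G}$ in which the column player receives an additional bonus of $\delta\Pr[s^r_0]/(1-\Pr[s^r_0])$ for playing $s^c_k$.
   Context: $\mathcal{G}$ is an $n\times n$ two-player game, with row strategies $s^r_1,\dots,s^r_n$ and column strategies $s^c_1,\dots,s^c_n$, whose payoffs lie in $[0.9,1.1]$; $k\in\{1,\dots,n\}$ is a fixed index and $\delta>0$ a constant. $\mathcal{G}_0$ is the $(n+1)\times(n+1)$ game with strategies $s^r_0,\dots,s^r_n$ and $s^c_0,\dots,s^c_n$ in which each player gets $1$ for playing $s^r_0$ (resp. $s^c_0$) and $0$ for any other strategy. $\mathcal{G}_1$ is the $(n+1)\times(n+1)$ game with payoffs (row, column): $(s^r_0,s^c_0)\mapsto(0,-1)$; $(s^r_0,s^c_j)\mapsto(0,\tfrac34)$ for $j\ge1$, $j\ne k$; $(s^r_0,s^c_k)\mapsto(0,\tfrac34+\delta)$; $(s^r_j,s^c_0)\mapsto(-1,\tfrac34)$ for $j\ge1$; and on $\{s^r_1,\dots,s^r_n\}\times\{s^c_1,\dots,s^c_n\}$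 the payoffs of $\mathcal{G}$. $\mathcal{G}_t=(1-t)\mathcal{G}_0+t\mathcal{G}_1$ (payoffs interpolated linearly). $\Pr[s]$ denotes the probability that the owner of pure strategy $s$ plays $s$ in $\mathcal{N}$. *)

From mathcomp Require Import all_boot all_order all_algebra.
Set Implicit Arguments. Unset Strict Implicit. Unset Printing Implicit Defensive.
Import Order.TTheory GRing.Theory Num.Theory.
Local Open Scope ring_scope.

Definition mixed (R : numDomainType) (m : nat) (x : 'I_m -> R) : Prop :=
  (forall i, 0 <= x i) /\ \sum_(i < m) x i = 1.

Definition exp_payoff (R : numDomainType) (m m' : nat) (P : 'M[R]_(m, m'))
  (x : 'I_m -> R) (y : 'I_m' -> R) : R :=
  \sum_(i < m) \sum_(j < m') x i * P i j * y j.

Definition nash (R : numDomainType) (m m' : nat) (A B : 'M[R]_(m, m'))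
  (x : 'I_m -> R) (y : 'I_m' -> R) : Prop :=
  mixed x /\ mixed y /\
  (forall x', mixed x' -> exp_payoff A x' y <= exp_payoff A x y) /\
  (forall y', mixed y' -> exp_payoff B x y' <= exp_payoff B x y).

(* Strategy index 0 of 'I_n.+1 is s_0; index (lift ord0 j) is s_{j+1}. *)

Definition G0r (R : ringType) n : 'M[R]_(n.+1, n.+1) :=
  \matrix_(i, j) (if i == ord0 then 1 else 0).
Definition G0c (R : ringType) n : 'M[R]_(n.+1, n.+1) :=
  \matrix_(i, j) (if j == ord0 then 1 else 0).

Definition G1r (R : fieldType) n (A : 'M[R]_n) : 'M[R]_(n.+1, n.+1) :=
  \matrix_(i, j)
    match unlift ord0 i, unlift ord0 j with
    | None, _ => 0
    | Some _, None => -1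
    | Some i', Some j' => A i' j'
    end.
Definition G1c (R : fieldType) n (B : 'M[R]_n) (k : 'I_n) (delta : R)
  : 'M[R]_(n.+1, n.+1) :=
  \matrix_(i, j)
    match unlift ord0 i, unlift ord0 j with
    | None, None => -1
    | None, Some j' => if j' == k then 3/4 + delta else 3/4
    | Some _, None => 3/4
    | Some i', Some j' => B i' j'
    end.

Definition Gtr (R : fieldType) n (A : 'M[R]_n) (t : R) :=
  (1 - t) *: G0r R n + t *: G1r A.
Definition Gtc (R : fieldType) n (B : 'M[R]_n) (k : 'I_n) (delta t : R) :=
  (1 - t) *: G0c R n + t *: G1c B k delta.

Definition cond (R : fieldType) n (x : 'I_n.+1 -> R) : 'I_n -> R :=
  fun j => x (lift ord0 j) / (1 - x ord0).

Definition bonus_col (R : ringType) n (B : 'M[R]_n) (k : 'I_n) (b : R) : 'M[R]_n :=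
  \matrix_(i, j) (B i j + (if j == k then b else 0)).

From mathcomp Require Import all_boot all_order all_algebra.
From mathcomp Require Import ring.
Import Order.TTheory GRing.Theory Num.Theory.
Set Implicit Arguments.
Unset Strict Implicit.
Unset Printing Implicit Defensive.
Local Open Scope ring_scope.

(* Proof idea: a deviation of a player in G (with the bonus) to a distribution p
   lifts to the deviation in G_t that keeps the same weight on s_0 and
   distributes the rest according to p. For such strategies the G_t-payoff is
   an affine function of the G-payoff of the conditional distributions, with
   slope t (1 - Pr[s^r_0]) (1 - Pr[s^c_0]); for the column player the terms
   coming from s^r_0 produce exactly the bonus on s^c_k. The slope is positive,
   since for t = 0 the strategy s^r_0 is the only best response of the row
   player, so equilibrium inequalities transfer from G_t to G. *)

Section Payoff.
Variable R : numDomainType.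

Lemma eq_exp_payoff m m' (M : 'M[R]_(m, m')) x x' y y' :
  x =1 x' -> y =1 y' -> exp_payoff M x y = exp_payoff M x' y'.
Proof. by move=> ex ey; apply: eq_bigr => i _; apply: eq_bigr => j _; rewrite ex ey. Qed.

Lemma exp_payoffD m m' (M N : 'M[R]_(m, m')) x y :
  exp_payoff (M + N) x y = exp_payoff M x y + exp_payoff N x y.
Proof.
rewrite /exp_payoff -big_split; apply: eq_bigr => i _.
by rewrite -big_split; apply: eq_bigr => j _; rewrite mxE mulrDr mulrDl.
Qed.

Lemma exp_payoffZ m m' (a : R) (M : 'M[R]_(m, m')) x y :
  exp_payoff (a *: M) x y = a * exp_payoff M x y.
Proof.
rewrite /exp_payoff mulr_sumr; apply: eq_bigr => i _.
by rewrite mulr_sumr; apply: eq_bigr => j _; rewrite mxE; ring.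
Qed.

Lemma exp_payoffZl m m' (c : R) (M : 'M[R]_(m, m')) x y :
  exp_payoff M (fun i => c * x i) y = c * exp_payoff M x y.
Proof.
rewrite /exp_payoff mulr_sumr; apply: eq_bigr => i _.
by rewrite mulr_sumr; apply: eq_bigr => j _; ring.
Qed.

Lemma exp_payoffZr m m' (c : R) (M : 'M[R]_(m, m')) x y :
  exp_payoff M x (fun j => c * y j) = c * exp_payoff M x y.
Proof.
rewrite /exp_payoff mulr_sumr; apply: eq_bigr => i _.
by rewrite mulr_sumr; apply: eq_bigr => j _; ring.
Qed.

Lemma exp_payoff_lift0 m m' (M : 'M[R]_(m.+1, m'.+1)) x y :
  exp_payoff M x y =
    x ord0 * M ord0 ord0 * y ord0
  + \sum_(j < m') x ord0 * M ord0 (lift ord0 j) * y (lift ord0 j)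
  + \sum_(i < m) x (lift ord0 i) * M (lift ord0 i) ord0 * y ord0
  + exp_payoff (\matrix_(i, j) M (lift ord0 i) (lift ord0 j))
      (x \o lift ord0) (y \o lift ord0).
Proof.
rewrite /exp_payoff big_ord_recl big_ord_recl -!addrA; congr (_ + (_ + _)).
rewrite -big_split; apply: eq_bigr => i _ /=.
by rewrite big_ord_recl; congr (_ + _); apply: eq_bigr => j _; rewrite mxE.
Qed.

Lemma exp_payoff_bonus_col n (B : 'M[R]_n) k b p q :
  exp_payoff (bonus_col B k b) p q = exp_payoff B p q + b * (\sum_i p i) * q k.
Proof.
rewrite /exp_payoff mulr_sumr mulr_suml -big_split; apply: eq_bigr => i _ /=.
rewrite (bigD1 k) //= (bigD1 k (P := xpredT)) //= !mxE eqxx.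
rewrite (eq_bigr (fun j => p i * B i j * q j)) => [|j /negbTE nkj]; last first.
  by rewrite !mxE nkj addr0.
ring.
Qed.

End Payoff.

Section Strategies.
Variables (R : realFieldType) (n : nat).
Implicit Types (x : 'I_n.+1 -> R) (p : 'I_n -> R).

Definition mix0 (a : R) p : 'I_n.+1 -> R :=
  fun i => if unlift ord0 i is Some j then (1 - a) * p j else a.

Lemma mix0_ord0 a p : mix0 a p ord0 = a.
Proof. by rewrite /mix0 unlift_none. Qed.

Lemma mix0_lift a p i : mix0 a p (lift ord0 i) = (1 - a) * p i.
Proof. by rewrite /mix0 liftK. Qed.

Lemma mix0_mixed a p : 0 <= a <= 1 -> mixed p -> mixed (mix0 a p).
Proof.
move=> /andP[a_ge0 a_le1] [p_ge0 p_sum1]; split.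
  by move=> i; rewrite /mix0; case: unlift => [j|] //; rewrite mulr_ge0 ?subr_ge0.
rewrite big_ord_recl mix0_ord0 (eq_bigr _ (fun i _ => mix0_lift a p i)).
by rewrite -mulr_sumr p_sum1; ring.
Qed.

Lemma cond_mix0 a p : a != 1 -> cond (mix0 a p) =1 p.
Proof.
move=> a_neq1 i; rewrite /cond mix0_ord0 mix0_lift mulrC mulrA mulVf ?mul1r //.
by rewrite subr_eq0 eq_sym.
Qed.

Lemma sum_lift_mixed x : mixed x -> \sum_i x (lift ord0 i) = 1 - x ord0.
Proof. by case=> _; rewrite big_ord_recl => <-; ring. Qed.

Lemma lift_cond x : x ord0 != 1 -> x \o lift ord0 =1 (fun i => (1 - x ord0) * cond x i).
Proof. by move=> x0_neq1 i; rewrite /cond mulrC divfK // subr_eq0 eq_sym. Qed.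

Lemma sum_cond x : mixed x -> x ord0 != 1 -> \sum_i cond x i = 1.
Proof.
move=> x_mixed x0_neq1.
by rewrite /cond -mulr_suml sum_lift_mixed // mulfV // subr_eq0 eq_sym.
Qed.

Lemma cond_mixed x : mixed x -> x ord0 < 1 -> mixed (cond x).
Proof.
move=> x_mixed x0_lt1; split; last by rewrite sum_cond // lt_eqF.
have [x_ge0 _] := x_mixed.
by move=> i; rewrite /cond divr_ge0 // subr_ge0 ltW.
Qed.

End Strategies.

Lemma lift0_eq0 m (i : 'I_m) : (lift ord0 i == ord0) = false.
Proof. by rewrite eq_sym (negbTE (neq_lift _ _)). Qed.

Section Games.
Variables (R : realFieldType) (n : nat) (A B : 'M[R]_n) (k : 'I_n) (delta : R).
Implicit Types (x y : 'I_n.+1 -> R).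

Lemma exp_payoff_G0r x y : exp_payoff (G0r R n) x y = x ord0 * \sum_j y j.
Proof.
rewrite /exp_payoff big_ord_recl [X in _ + X]big1 ?addr0 => [|i _]; last first.
  by apply: big1 => j _; rewrite mxE lift0_eq0 mulr0 mul0r.
by rewrite mulr_sumr; apply: eq_bigr => j _; rewrite mxE eqxx mulr1.
Qed.

Lemma exp_payoff_G0c x y : exp_payoff (G0c R n) x y = (\sum_i x i) * y ord0.
Proof.
rewrite /exp_payoff mulr_suml; apply: eq_bigr => i _.
rewrite big_ord_recl [X in _ + X]big1 ?addr0 => [|j _]; first by rewrite mxE eqxx mulr1.
by rewrite mxE lift0_eq0 mulr0 mul0r.
Qed.

Lemma exp_payoff_G1r x y :
  exp_payoff (G1r A) x y =
    exp_payoff A (x \o lift ord0) (y \o lift ord0)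
    - (\sum_i x (lift ord0 i)) * y ord0.
Proof.
rewrite exp_payoff_lift0 mxE unlift_none mulr0 mul0r add0r.
rewrite big1 => [|j _]; last by rewrite mxE unlift_none mulr0 mul0r.
rewrite add0r mulr_suml (eq_bigr (fun i => - (x (lift ord0 i) * y ord0))).
  rewrite sumrN addrC; congr (exp_payoff _ _ _ - _).
  by apply/matrixP => i j; rewrite !mxE !liftK.
by move=> i _; rewrite mxE liftK unlift_none; ring.
Qed.

Lemma exp_payoff_G1c x y :
  exp_payoff (G1c B k delta) x y =
    exp_payoff B (x \o lift ord0) (y \o lift ord0)
    + x ord0 * (3/4 * \sum_j y (lift ord0 j) + delta * y (lift ord0 k))
    + (3/4 * \sum_i x (lift ord0 i) - x ord0) * y ord0.
Proof.
rewrite exp_payoff_lift0.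
have -> : \matrix_(i, j) G1c B k delta (lift ord0 i) (lift ord0 j) = B.
  by apply/matrixP => i j; rewrite !mxE !liftK.
rewrite mxE unlift_none.
rewrite (eq_bigr (fun j => x ord0 * (3/4 * y (lift ord0 j))
    + (if j == k then x ord0 * delta * y (lift ord0 j) else 0))); last first.
  by move=> j _; rewrite mxE unlift_none liftK; case: eqP => _; ring.
rewrite [X in _ + X + _ = _](eq_bigr (fun i => 3/4 * x (lift ord0 i) * y ord0)); last first.
  by move=> i _; rewrite mxE liftK unlift_none; ring.
rewrite big_split /= -mulr_sumr -!mulr_suml -mulr_sumr.
rewrite -big_mkcond big_pred1_eq -mulr_sumr.
ring.
Qed.

Section Interpolation.
Variable t : R.

Lemma exp_payoff_Gtr_cond x y :
  mixed x -> mixed y -> x ord0 != 1 -> y ord0 != 1 ->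
  exp_payoff (Gtr A t) x y =
    (1 - t) * x ord0 - t * (1 - x ord0) * y ord0
    + t * (1 - x ord0) * (1 - y ord0) * exp_payoff A (cond x) (cond y).
Proof.
move=> x_mixed y_mixed x0_neq1 y0_neq1.
rewrite exp_payoffD !exp_payoffZ exp_payoff_G0r exp_payoff_G1r.
rewrite (eq_exp_payoff _ (lift_cond x0_neq1) (lift_cond y0_neq1)).
rewrite exp_payoffZl exp_payoffZr sum_lift_mixed //; case: y_mixed => _ ->; ring.
Qed.

Lemma exp_payoff_Gtc_cond x y :
  mixed x -> mixed y -> x ord0 != 1 -> y ord0 != 1 ->
  exp_payoff (Gtc B k delta t) x y =
    (1 - t) * y ord0 + t * (3/4 * x ord0 * (1 - y ord0) + (3/4 * (1 - x ord0) - x ord0) * y ord0)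
    + t * (1 - x ord0) * (1 - y ord0)
      * exp_payoff (bonus_col B k (delta * x ord0 / (1 - x ord0))) (cond x) (cond y).
Proof.
move=> x_mixed y_mixed x0_neq1 y0_neq1.
rewrite exp_payoffD !exp_payoffZ exp_payoff_G0c exp_payoff_G1c exp_payoff_bonus_col.
rewrite (eq_exp_payoff _ (lift_cond x0_neq1) (lift_cond y0_neq1)).
rewrite exp_payoffZl exp_payoffZr !sum_lift_mixed // sum_cond //.
move: (lift_cond y0_neq1 k) => /= ->; case: x_mixed => _ ->.
by field; rewrite subr_eq0 eq_sym.
Qed.

Lemma nash_Gtr_t_gt0 (C : 'M[R]_n.+1) x y :
  0 <= t -> nash (Gtr A t) C x y -> x ord0 < 1 -> 0 < t.
Proof.
move=> t_ge0 [x_mixed [[_ y_sum1] [x_best _]]] x0_lt1.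
rewrite lt_def t_ge0 andbT; apply/eqP => t_eq0.
have one_in01 : 0 <= (1 : R) <= 1 by rewrite ler01 lexx.
have := x_best _ (mix0_mixed one_in01 (cond_mixed x_mixed x0_lt1)).
rewrite /Gtr t_eq0 subr0 scale1r scale0r addr0 !exp_payoff_G0r y_sum1 mix0_ord0.
by rewrite !mulr1 leNgt x0_lt1.
Qed.

End Interpolation.

End Games.

Theorem lemma2 (R : realFieldType) (n : nat) (A B : 'M[R]_n) (k : 'I_n)
  (delta t : R) (x y : 'I_n.+1 -> R) :
  (forall i j, 9/10 <= A i j <= 11/10) ->
  (forall i j, 9/10 <= B i j <= 11/10) ->
  0 < delta ->
  0 <= t <= 1 ->
  nash (Gtr A t) (Gtc B k delta t) x y ->
  x ord0 < 1 -> y ord0 < 1 ->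
  nash A (bonus_col B k (delta * x ord0 / (1 - x ord0))) (cond x) (cond y).
Proof.
move=> _ _ _ /andP[t_ge0 _] Nxy x0_lt1 y0_lt1.
have t_gt0 := nash_Gtr_t_gt0 t_ge0 Nxy x0_lt1.
have [x_mixed [y_mixed [x_best y_best]]] := Nxy.
have x0_neq1 : x ord0 != 1 by rewrite lt_eqF.
have y0_neq1 : y ord0 != 1 by rewrite lt_eqF.
have x0_in01 : 0 <= x ord0 <= 1 by case: x_mixed => x_ge0 _; rewrite x_ge0 ltW.
have y0_in01 : 0 <= y ord0 <= 1 by case: y_mixed => y_ge0 _; rewrite y_ge0 ltW.
have weight_gt0 : 0 < t * (1 - x ord0) * (1 - y ord0) by rewrite !mulr_gt0 // subr_gt0.
do 2 (split; first exact: cond_mixed); split.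
- move=> p p_mixed; have x'_mixed := mix0_mixed x0_in01 p_mixed.
  have := x_best _ x'_mixed; rewrite !exp_payoff_Gtr_cond ?mix0_ord0 //.
  by rewrite (eq_exp_payoff _ (cond_mix0 _ x0_neq1) (frefl _)) lerD2l ler_pM2l.
- move=> q q_mixed; have y'_mixed := mix0_mixed y0_in01 q_mixed.
  have := y_best _ y'_mixed; rewrite !exp_payoff_Gtc_cond ?mix0_ord0 //.
  by rewrite (eq_exp_payoff _ (frefl _) (cond_mix0 _ y0_neq1)) lerD2l ler_pM2l.
Qed.
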